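(* Let $M$ be the prefix matching generated by a diagonal matching rule $F$, and let $a_1\to b_1\to\cdots\to a_p\to b_p\to a_{p+1}=a_1$ be a directed cycle in $\Gamma^M$ as described in the context, with $a_i=(a_{i,0},\dots,a_{i,k})$. Then $d(a_{i,d_i-1},a_{i,d_i})=1$ for all $i$.
   Context: $G$ is a finite simple connected graph with distance $d$; $\ell(x_0,\dots,x_k)=\sum_{i=0}^{k-1}d(x_i,x_{i+1})$; sequences are elements of $I_{k,l}(G)=\{(x_0,\dots,x_k)\in V(G)^{k+1}:x_i\ne x_{i+1}\ \forall i,\ \ell=l\}$. $\Gamma$ is the directed graph on sequences with an edge $a\to b$ whenever $b$ is obtained from $a=(x_0,\dots,x_k)$ by deleting some $x_i$, $1\le i\le k-1$, with $\ell(b)=\ell(a)$. A matching is a set of pairwise vertex-disjoint edges of $\Gamma$; $\Gamma^M$ is $\Gamma$ with edges of $M$ reversed. Matching states: ''unmatched'', ''insert$(i,v)$'' (matched to $(x_0,\dots,x_i,v,x_{i+1},\dots,x_k)$), ''delete$(i)$'' (matched to $(x_0,\dots,\hat x_i,\dots,x_k)$). A prefix matching: whenever $(x_0,\dots,x_k)$ has state insert$(i,v)$ (resp. delete$(i)$), every sequence $(x_0,\dots,x_{i+1},y_{i+2},\dots,y_{k'})$ has the same state. A matching rule is a function $F$ from sequences to $\{\epsilon\}\cup\{\iota(v):v\in V(G)\}\cup\{\delta\}$; a prefix matching $M$ is generated by $F$ if for every sequence $(x_0,\dots,x_k)$, $k\ge1$, with unmatched prefix $(x_0,\dots,x_{k-1})$,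 its state is insert$(k-1,v)$ iff $F(x_0,\dots,x_k)=\iota(v)$ and delete$(k-1)$ iff $F(x_0,\dots,x_k)=\delta$. $F$ is valid if (1) $F(x_0,\dots,x_k)=\iota(v)$ implies $v\notin\{x_{k-1},x_k\}$, $d(x_{k-1},v)+d(v,x_k)=d(x_{k-1},x_k)$, $F(x_0,\dots,x_{k-1},v)=\epsilon$, $F(x_0,\dots,x_{k-1},v,x_k)=\delta$; (2) $F(x_0,\dots,x_k)=\delta$ implies $d(x_{k-2},x_{k-1})+d(x_{k-1},x_k)=d(x_{k-2},x_k)$ and $F(x_0,\dots,x_{k-2},x_k)=\iota(x_{k-1})$. A valid $F$ is diagonal if, w.r.t. the prefix matching it generates, $F(x_0,\dots,x_k)\ne\epsilon$ for every sequence with unmatched prefix and $d(x_{k-1},x_k)\ge2$. Cycle setting: $a_i\in I_{k,l}(G)$, $b_i\in I_{k-1,l}(G)$, each $a_i\to b_i$ is an edge of $\Gamma$ not in $M$, each $b_i\to a_{i+1}$ is a reversed edge of $M$; $d_i$ is the position of the entry of $a_i$ deleted to obtain $b_i$; $a_{i+1}=(b_{i,0},\dots,b_{i,c_i},u_i,b_{i,c_i+1},\dots,b_{i,k-1})$ where $b_i=(b_{i,0},\dots,b_{i,k-1})$; indices $i$ are taken modulo $p$. *)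

From HB Require Import structures.
From mathcomp Require Import all_boot.
Set Implicit Arguments. Unset Strict Implicit. Unset Printing Implicit Defensive.

Inductive rule_val (T : Type) := Eps | Iota of T | Delta.
Arguments Eps {T}. Arguments Delta {T}.

Section Defs.
Variables (T : finType) (adj : rel T).

Definition simple_connected : Prop :=
  symmetric adj /\ irreflexive adj /\ (forall x y, connect adj x y).

Definition walk_len (x y : T) (n : nat) : bool :=
  [exists p : n.-tuple T, path adj x p && (last x p == y)].

(* graph distance: least n with a walk of length n (a shortest walk in a
   connected graph has fewer than #|T| edges) *)
Definition dist (x y : T) : nat := find (walk_len x y) (iota 0 #|T|).

Definition is_seq (s : seq T) : bool := (0 < size s) && sorted (fun u v => u != v) s.

Fixpoint ell (s : seq T) : nat :=
  match s with
  | x :: ((y :: _) as s') => dist x y + ell s'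
  | _ => 0
  end.

Definition in_I (k l : nat) (s : seq T) : bool :=
  [&& is_seq s, size s == k.+1 & ell s == l].

Definition del (s : seq T) (i : nat) : seq T := take i s ++ drop i.+1 s.
Definition ins (s : seq T) (i : nat) (v : T) : seq T := take i.+1 s ++ v :: drop i.+1 s.

Definition gamma (a b : seq T) : Prop :=
  is_seq a /\ is_seq b /\
  exists i, 0 < i /\ i.+1 < size a /\ b = del a i /\ ell b = ell a.

Definition is_matching (M : seq T -> seq T -> Prop) : Prop :=
  (forall a b, M a b -> gamma a b) /\
  (forall a b b', M a b -> M a b' -> b = b') /\
  (forall a a' b, M a b -> M a' b -> a = a') /\
  (forall a b c, M a b -> M b c -> False).

Definition unmatched (M : seq T -> seq T -> Prop) (s : seq T) : Prop :=
  (forall t, ~ M s t) /\ (forall t, ~ M t s).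

Definition st_ins (M : seq T -> seq T -> Prop) (s : seq T) (i : nat) (v : T) : Prop :=
  i.+1 < size s /\ M (ins s i v) s.

Definition st_del (M : seq T -> seq T -> Prop) (s : seq T) (i : nat) : Prop :=
  0 < i /\ i.+1 < size s /\ M s (del s i).

Definition prefix_matching (M : seq T -> seq T -> Prop) : Prop :=
  (forall s i v, is_seq s -> st_ins M s i v ->
     forall y, is_seq y -> take i.+2 y = take i.+2 s -> st_ins M y i v) /\
  (forall s i, is_seq s -> st_del M s i ->
     forall y, is_seq y -> take i.+2 y = take i.+2 s -> st_del M y i).

(* M is generated by F; a sequence (x_0..x_k), k>=1, is written
   rcons (rcons pre x_{k-1}) x_k, so that k-1 = size pre *)
Definition generated (F : seq T -> rule_val T) (M : seq T -> seq T -> Prop) : Prop :=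
  forall pre u w, is_seq (rcons (rcons pre u) w) -> unmatched M (rcons pre u) ->
    (forall v, st_ins M (rcons (rcons pre u) w) (size pre) v <->
               F (rcons (rcons pre u) w) = Iota v) /\
    (st_del M (rcons (rcons pre u) w) (size pre) <->
               F (rcons (rcons pre u) w) = Delta).

Definition valid_rule (F : seq T -> rule_val T) : Prop :=
  (forall pre u w v, is_seq (rcons (rcons pre u) w) ->
     F (rcons (rcons pre u) w) = Iota v ->
     [/\ v != u, v != w, dist u v + dist v w = dist u w,
         F (rcons (rcons pre u) v) = Eps &
         F (rcons (rcons (rcons pre u) v) w) = Delta]) /\
  (forall pre t u w, is_seq (pre ++ [:: t; u; w]) ->
     F (pre ++ [:: t; u; w]) = Delta ->
     dist t u + dist u w = dist t w /\ F (rcons (rcons pre t) w) = Iota u).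

Definition diagonal (F : seq T -> rule_val T) (M : seq T -> seq T -> Prop) : Prop :=
  valid_rule F /\
  forall pre u w, is_seq (rcons (rcons pre u) w) -> unmatched M (rcons pre u) ->
    2 <= dist u w -> F (rcons (rcons pre u) w) <> Eps.

End Defs.

(* The potential is the weighted length [suffix_ell_sum], i.e. the sum of the lengths of
   all suffixes, \sum_i i * d(x_(i-1), x_i). In a step a_i -> b_i -> a_(i+1) of the cycle,
   write u, x, q for the entries of a_i at positions d_i - 1, d_i, d_i + 1. The common
   prefix ending at u is unmatched and d(u, q) = d(u, x) + d(x, q) >= 2, so the diagonal
   rule must insert some v on a geodesic from u to q, and a_(i+1) is a_i with x replaced
   by v; moreover d(u, v) = 1, since otherwise the rule could not answer epsilon after u, v.
   Hence the potential grows by d(u, x) - 1 >= 0 at each step; since it returns to its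
   initial value around the cycle, every d(u, x) equals 1. *)

From mathcomp Require Import all_boot zify.
Set Implicit Arguments. Unset Strict Implicit.

Section Sequences.
Variables (T : finType) (adj : rel T).

Lemma dist_gt0 x y : x != y -> 0 < dist adj x y.
Proof.
move=> neq_xy; rewrite /dist.
have : 0 < #|T| by apply/card_gt0P; exists x.
case: #|T| => // n _ /=.
suff -> : walk_len adj x y 0 = false by [].
by apply/existsP => -[t]; rewrite tuple0 /= (negbTE neq_xy).
Qed.

Lemma ell_rcons_cat s u z R :
  ell adj (rcons s u ++ z :: R) = ell adj (rcons s u) + dist adj u z + ell adj (z :: R).
Proof.
elim: s => [|x s IH] /=; first by rewrite add0n.
by case: s IH => [|y s] /= IH; rewrite ?IH; lia.
Qed.

Lemma ell_replace s u x x' q R :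
  dist adj u x + dist adj x q = dist adj u x' + dist adj x' q ->
  ell adj (rcons s u ++ x :: q :: R) = ell adj (rcons s u ++ x' :: q :: R).
Proof. by move=> Exx'; rewrite !ell_rcons_cat /=; lia. Qed.

Fixpoint suffix_ell_sum (s : seq T) : nat :=
  if s is _ :: s' then ell adj s + suffix_ell_sum s' else 0.

Lemma suffix_ell_sum_replace s u x x' q R :
  dist adj u x + dist adj x q = dist adj u x' + dist adj x' q ->
  suffix_ell_sum (rcons s u ++ x :: q :: R) + dist adj x' q =
  suffix_ell_sum (rcons s u ++ x' :: q :: R) + dist adj x q.
Proof.
move=> Exx'; elim: s => [|w s IH]; first by rewrite /=; lia.
have unfold_cons t : suffix_ell_sum (w :: t) = ell adj (w :: t) + suffix_ell_sum t by [].
by rewrite rcons_cons !cat_cons !unfold_cons (ell_replace (w :: s) _ Exx') -!addnA IH.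
Qed.

Lemma is_seq_catl (s t : seq T) : 0 < size s -> is_seq (s ++ t) -> is_seq s.
Proof. by move=> s_gt0 /andP[_ /cat_sorted2[]] sorted_s _; apply/andP. Qed.

Lemma is_seq_neq (s t : seq T) x y : is_seq (s ++ x :: y :: t) -> x != y.
Proof. by case/andP=> _ /cat_sorted2[_ /andP[]]. Qed.

Lemma is_seq_rcons (s : seq T) u v :
  is_seq (rcons s u) -> u != v -> is_seq (rcons (rcons s u) v).
Proof.
case: s => [|w s] /andP[_ /= path_s] neq_uv; rewrite /is_seq ?size_rcons /= ?andbT //.
by rewrite rcons_path path_s last_rcons neq_uv.
Qed.

Lemma is_seq_nth_neq (s : seq T) i x0 :
  is_seq s -> 0 < i -> i < size s -> nth x0 s i.-1 != nth x0 s i.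
Proof.
case: s => [//|y s] /andP[_ /(pathP x0) neq_s]; case: i => // i _ /=.
exact: neq_s.
Qed.

Lemma ins_del (t : seq T) e x0 :
  0 < e -> e < size t -> ins (del t e) e.-1 (nth x0 t e) = t.
Proof.
move=> e_gt0 lt_et; rewrite /ins /del prednK //.
have size_take_e : size (take e t) = e by rewrite size_take lt_et.
rewrite takel_cat ?size_take_e // take_oversize ?size_take_e //.
by rewrite drop_size_cat // -drop_nth // cat_take_drop.
Qed.

Lemma take_prefix (s y : seq T) n : prefix s y -> n <= size s -> take n y = take n s.
Proof. by move=> /prefixP[t ->] le_ns; rewrite takel_cat. Qed.

Lemma del_split (a : seq T) d x0 : 0 < d -> d.+1 < size a ->
  exists pre R,
    a = rcons pre (nth x0 a d.-1) ++ nth x0 a d :: nth x0 a d.+1 :: R /\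
    del a d = rcons pre (nth x0 a d.-1) ++ nth x0 a d.+1 :: R.
Proof.
move=> d_gt0 lt_da; exists (take d.-1 a), (drop d.+2 a).
have take_d : rcons (take d.-1 a) (nth x0 a d.-1) = take d a.
  by rewrite -take_nth prednK //; lia.
have drop_d : drop d a = nth x0 a d :: nth x0 a d.+1 :: drop d.+2 a.
  by rewrite -!drop_nth //; lia.
rewrite take_d -drop_d cat_take_drop; split=> //.
by rewrite /del -drop_nth.
Qed.

End Sequences.

Section Matching.
Variables (T : finType) (adj : rel T).
Variables (F : seq T -> rule_val T) (M : seq T -> seq T -> Prop).
Hypotheses (HM : is_matching adj M) (Hpre : prefix_matching M).
Hypotheses (Hgen : generated F M) (Hdiag : diagonal adj F M).

Lemma prefix_unmatched (s a b : seq T) :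
  is_seq s -> is_seq a -> is_seq b -> prefix s a -> prefix s b ->
  (forall c, ~ M c a) -> (forall c, ~ M b c) -> unmatched M s.
Proof.
case: HM => gammaM _; case: Hpre => ins_pre del_pre.
move=> is_s is_a is_b s_a s_b noM_a noM_b; split.
- move=> t Mst.
  have [_ [_ [e [e_gt0 [lt_es [Et _]]]]]] := gammaM _ _ Mst.
  have st_s : st_del M s e by rewrite /st_del -Et.
  by have [_ [_ /noM_b]] := del_pre _ _ is_s st_s _ is_b (take_prefix s_b lt_es).
- move=> t Mts.
  have [is_t [_ [e [e_gt0 [lt_et [Es _]]]]]] := gammaM _ _ Mts.
  case: t is_t Mts lt_et Es => [//|x0 t] is_t Mts lt_et Es.
  have lt_es : e < size s.
    by rewrite Es /del size_cat size_take_min size_drop; lia.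
  have st_s : st_ins M s e.-1 (nth x0 (x0 :: t) e).
    split; first by rewrite prednK.
    by rewrite {1}Es ins_del //; lia.
  have take_s : take e.-1.+2 a = take e.-1.+2 s by apply: take_prefix; rewrite ?prednK.
  by have [_ /noM_a] := ins_pre _ _ _ is_s st_s _ is_a take_s.
Qed.

Lemma deletion_partner pre u x q R a' :
  is_seq (rcons pre u ++ x :: q :: R) -> is_seq (rcons pre u ++ q :: R) ->
  ell adj (rcons pre u ++ q :: R) = ell adj (rcons pre u ++ x :: q :: R) ->
  M a' (rcons pre u ++ q :: R) -> (exists t, M (rcons pre u ++ x :: q :: R) t) ->
  exists2 v, a' = rcons pre u ++ v :: q :: R & dist adj u v = 1.
Proof.
case: HM => _ [_ [M_inj M_chain]]; case: Hpre => ins_pre del_pre.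
case: Hdiag => [[rule_iota _] rule_eps].
set a := rcons pre u ++ _; set b := rcons pre u ++ _.
move=> is_a is_b ell_ba Ma'b [t Mat].
have noM_a c : ~ M c a by move=> Mca; exact: M_chain Mca Mat.
have noM_b c : ~ M b c by apply: M_chain Ma'b.
have neq_ux : u != x by apply: (@is_seq_neq _ pre (q :: R)); rewrite -cat_rcons.
have neq_xq : x != q by apply: (@is_seq_neq _ (rcons pre u) R).
have is_pu : is_seq (rcons pre u) by apply: is_seq_catl is_b; rewrite size_rcons.
have unmatched_u : unmatched M (rcons pre u).
  exact: prefix_unmatched is_pu is_a is_b (prefix_prefix _ _) (prefix_prefix _ _) noM_a noM_b.
set w := rcons (rcons pre u) q.
have Eb : b = w ++ R by rewrite /b -cat_rcons.
have is_w : is_seq w by apply: (is_seq_catl (t := R)); rewrite ?size_rcons -?Eb.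
have take_w : take (size pre).+2 b = take (size pre).+2 w.
  by rewrite Eb takel_cat // !size_rcons.
have dist_uq : dist adj u x + dist adj x q = dist adj u q.
  by move: ell_ba; rewrite !ell_rcons_cat /=; lia.
have ge2_uq : 2 <= dist adj u q.
  by rewrite -dist_uq; have := dist_gt0 adj neq_ux; have := dist_gt0 adj neq_xq; lia.
have [st_ins_w st_del_w] := Hgen is_w unmatched_u.
case Fw : (F w) (rule_eps _ _ _ is_w unmatched_u ge2_uq) => [//|v|] _.
- have [_ Mvb] := ins_pre _ _ _ is_w (proj2 (st_ins_w v) Fw) _ is_b take_w.
  have [neq_vu _ _ Fuv _] := rule_iota _ _ _ _ is_w Fw.
  have neq_uv : u != v by rewrite eq_sym.
  exists v.
    by rewrite (M_inj _ _ _ Ma'b Mvb) /ins /b take_size_cat ?drop_size_cat ?size_rcons.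
  have lt2_uv : dist adj u v < 2.
    rewrite ltnNge; apply/negP => ge2_uv.
    exact: rule_eps (is_seq_rcons is_pu neq_uv) unmatched_u ge2_uv Fuv.
  by have := dist_gt0 adj neq_uv; lia.
- by have [_ [_ /noM_b]] := del_pre _ _ is_w (proj2 st_del_w Fw) _ is_b take_w.
Qed.

Lemma suffix_ell_sum_step (a b a' : seq T) d x0 :
  is_seq a -> is_seq b -> 0 < d -> d.+1 < size a -> b = del a d ->
  ell adj b = ell adj a -> ell adj a' = ell adj a -> M a' b -> (exists t, M a t) ->
  suffix_ell_sum adj a + dist adj (nth x0 a d.-1) (nth x0 a d) = suffix_ell_sum adj a' + 1.
Proof.
move=> is_a is_b d_gt0 lt_da Eb ell_b ell_a' Ma'b Ma.
have [pre [R []]] := del_split x0 d_gt0 lt_da.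
set u := nth x0 a d.-1; set x := nth x0 a d; set q := nth x0 a d.+1.
clearbody u x q => Ea Edel; subst a; rewrite Edel in Eb; subst b.
have [v Ea' dist_uv] := deletion_partner is_a is_b ell_b Ma'b Ma; subst a'.
have Exv : dist adj u x + dist adj x q = dist adj u v + dist adj v q.
  by move: ell_a'; rewrite !ell_rcons_cat /=; lia.
by have := suffix_ell_sum_replace pre R Exv; lia.
Qed.

End Matching.

Lemma cycle_steps_eq1 (f g : nat -> nat) p :
  (forall j, j < p -> f j + g j = f (j.+1 %% p) + 1 /\ 0 < g j) ->
  forall i, i < p -> g i = 1.
Proof.
move=> step i lt_ip.
have lt_0p : 0 < p by lia.
have lt_last : p.-1 < p by rewrite ltn_predL.
have mono : {in [pred n | n < p] &, {homo f : m n / m <= n}}.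
  apply: homo_leq_in => [//||m n _ lt_np k /andP[_ lt_kn]|m _ lt_m1p].
  - exact: leq_trans.
  - exact: ltn_trans lt_kn lt_np.
  - have [] := step m (ltnW lt_m1p).
    by rewrite modn_small //; lia.
have [step_i gi_gt0] := step i lt_ip.
have [step_last glast_gt0] := step p.-1 lt_last.
rewrite prednK // modnn in step_last.
have le_0i := mono 0 i lt_0p lt_ip (leq0n _).
case: (ltnP i.+1 p) => [lt_i1p | le_pi1].
  rewrite modn_small // in step_i.
  have := mono i.+1 p.-1 lt_i1p lt_last ltac:(lia); lia.
have Ei1 : i.+1 = p by lia.
by rewrite Ei1 modnn in step_i; lia.
Qed.

Theorem corollary3p9 (T : finType) (adj : rel T)
  (HG : simple_connected adj)
  (F : seq T -> rule_val T) (M : seq T -> seq T -> Prop)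
  (HM : is_matching adj M) (Hpre : prefix_matching M)
  (Hgen : generated F M) (Hdiag : diagonal adj F M)
  (k l p : nat) (a b : nat -> seq T) (d : nat -> nat)
  (Ha : forall i, i < p -> in_I adj k l (a i))
  (Hb : forall i, i < p -> in_I adj k.-1 l (b i))
  (Hab : forall i, i < p -> gamma adj (a i) (b i) /\ ~ M (a i) (b i))
  (Hba : forall i, i < p -> M (a (i.+1 %% p)) (b i))
  (Hd : forall i, i < p -> 0 < d i /\ (d i).+1 < size (a i) /\ b i = del (a i) (d i)) :
  forall i (x0 : T), i < p ->
    dist adj (nth x0 (a i) (d i).-1) (nth x0 (a i) (d i)) = 1.
Proof.
move=> i x0 lt_ip.
pose g j := dist adj (nth x0 (a j) (d j).-1) (nth x0 (a j) (d j)).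
apply: (@cycle_steps_eq1 (fun j => suffix_ell_sum adj (a j)) g p _ i lt_ip) => j lt_jp.
have [t Mt] : exists t, M (a j) t.
  case: j lt_jp => [|j] lt_jp.
    have lt_last : p.-1 < p by rewrite ltn_predL.
    by exists (b p.-1); have := Hba _ lt_last; rewrite prednK // modnn.
  by exists (b j); have := Hba j (ltnW lt_jp); rewrite modn_small.
have lt_j1p : j.+1 %% p < p by rewrite ltn_pmod //; lia.
have /and3P[is_aj _ /eqP ell_aj] := Ha j lt_jp.
have /and3P[_ _ /eqP ell_aj1] := Ha _ lt_j1p.
have /and3P[is_bj _ /eqP ell_bj] := Hb j lt_jp.
have [d_gt0 [lt_da Ebj]] := Hd j lt_jp.
split; last exact/dist_gt0/is_seq_nth_neq/ltnW.
apply: (suffix_ell_sum_step HM Hpre Hgen Hdiag x0 is_aj is_bj d_gt0 lt_da Ebj).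
- by rewrite ell_aj ell_bj.
- by rewrite ell_aj ell_aj1.
- exact: Hba.
- by exists t.
Qed.
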